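(* Assume the setting below and that the matrix $\Phi$ is positive definite. Then: (i) $\mathcal V_\Phi:=(\mathrm{Id}+\Phi^{-1}\mathcal B)^{-1}$ is single-valued on $\mathbb{R}^{N(3+2M)}$. (ii) For every $\omega^k=(\beta^k,\psi^k,\sigma^k,z^k,\lambda^k)\in\Omega\times\mathbb{R}^N\times\mathbb{R}^N\times\mathbb{R}^{NM}\times\mathbb{R}^{NM}_+$, the point $\omega^{k+1}$ produced by the iteration (IT) equals $\mathcal V_\Phi\circ\mathcal U_\Phi(\omega^k)$, where $\mathcal U_\Phi:=\mathrm{Id}-\Phi^{-1}\mathcal A$; equivalently, $0\in\mathcal A(\omega^k)+\mathcal B(\omega^{k+1})+\Phi(\omega^{k+1}-\omega^k)$. (iii) A point $\omega^*$ is a fixed point of $\mathcal V_\Phi\circ\mathcal U_\Phi$ (equivalently, a steady state of (IT)) if and only if $0\in(\mathcal A+\mathcal B)(\omega^* )$. (iv) If $\omega^*=(\beta^*,\psi^*,\sigma^*,z^*,\lambda^* )$ satisfies $0\in(\mathcal A+\mathcal B)(\omega^* )$, then $\sigma^*=\frac1N(\mathbf 1^\top\beta^* )\mathbf 1_N$, $\lambda^*=\mathbf 1_N\otimes\gamma_2$ for some $\gamma_2\in\mathbb{R}^M_+$, and $\beta^*$ is a v-GNE of the game, i.e. $\beta^*\in K$ and $(\beta-\beta^* )^\top F(\beta^* )\ge0$ for all $\beta\in K$.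
   Context: Game data: integers $N\ge2$ (aggregators) and $H\ge1$ (lines), $M:=2N+2H$. Reals $r\ge0$, $\alpha>0$, $a_n,b_n>0$, bid bounds $\underline\beta<\bar\beta$, load capacities $\hat x\in\mathbb{R}^N$, line capacities $\hat f\in\mathbb{R}^H_+$, net loads $e\in\mathbb{R}^N$, and a distribution-factor matrix $\Pi\in\mathbb{R}^{H\times N}$. Let $A:=I_N-\frac1N\mathbf 1\mathbf 1^\top$, $c:=\frac rN\mathbf 1_N$, $$\tilde A:=\begin{bmatrix}A\\-A\\-\Pi A\\\Pi A\end{bmatrix}\in\mathbb{R}^{M\times N},\qquad d:=\begin{bmatrix}\hat x-c\\c\\\hat f-\Pi(e-c)\\\hat f+\Pi(e-c)\end{bmatrix}\in\mathbb{R}^M.$$ Let $u_n$ be the $n$-th standard basis vector of $\mathbb{R}^N$, and define $$d_n:=\tfrac1N\big(-c;\ c;\ \hat f+\Pi c;\ \hat f-\Pi c\big)+\big(\hat x_nu_n;\ 0;\ -e_n\Pi u_n;\ e_n\Pi u_n\big),$$ so that $\sum_n d_n=d$. Let $\Omega:=[\underline\beta,\bar\beta]^N$ and $K:=\{\beta\in\Omega:\tilde A\beta\le d\}$. Standing assumption: some $\beta\in\Omega$ satisfies $\tilde A\beta<d$ componentwise. With $C_n'(x)=2a_nx+b_n$, the map $F:\mathbb{R}^N\to\mathbb{R}^N$ is defined by $$F_n(\beta)=\tfrac{N-1}{N}C_n'\big(\tfrac{r-\mathbf 1^\top\beta}{N}+\beta_n\big)+\tfrac{(\mathbf 1^\top\beta-r)(N-2)+N\beta_n}{\alpha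 N^2}$$ (the pseudo-gradient of the aggregators' costs). A v-GNE is a solution of the variational inequality $\mathrm{VI}(K,F)$. The map $\hat F:\mathbb{R}^N\times\mathbb{R}^N\to\mathbb{R}^N$ is defined by $$\hat F_n(\beta,\sigma)=\tfrac{N-1}{N}C_n'\big(\tfrac{r-N\sigma_n}{N}+\beta_n\big)+\tfrac{(N\sigma_n-r)(N-2)+N\beta_n}{\alpha N^2},$$ so that $\hat F(\beta,\frac1N\mathbf 1^\top\beta\,\mathbf 1)=F(\beta)$. Communication: $G$ is a connected undirected graph on $\{1,\dots,N\}$ with positive weights and weighted Laplacian $L$; $L_\sigma:=L$ and $L_\lambda:=L\otimes I_M$. Let $\tilde A_n\in\mathbb{R}^M$ be the $n$-th column of $\tilde A$, $\bar A:=\mathrm{blkdiag}(\tilde A_1,\dots,\tilde A_N)\in\mathbb{R}^{NM\times N}$, and $\bar d:=\mathrm{col}(d_1,\dots,d_N)\in\mathbb{R}^{NM}$. Parameters: $\kappa>0$; $\tau=\mathrm{diag}(\tau_n)$, $\upsilon=\mathrm{diag}(\upsilon_n)$, $\rho=\mathrm{diag}(\rho_n)$ in $\mathbb{R}^{N\times N}$; $\delta=\mathrm{blkdiag}(\delta_nI_M)$, $\eta=\mathrm{blkdiag}(\eta_nI_M)$ in $\mathbb{R}^{NM\times NM}$; all $\tau_n,\upsilon_n,\rho_n,\delta_n,\eta_n>0$. Iteration (IT): $$\begin{aligned} \beta^{k+1}&=\mathrm{proj}_\Omega[\beta^k-\tau(\hat F(\beta^k,\sigma^k)+\bar A^\top\lambda^k)],\\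 \psi^{k+1}&=\psi^k+\upsilon L_\sigma\sigma^k,\\ \sigma^{k+1}&=\sigma^k+\rho\big(\kappa(\beta^k-\sigma^k)-L_\sigma(2\psi^{k+1}-\psi^k)\big),\\ z^{k+1}&=z^k+\delta L_\lambda\lambda^k,\\ \lambda^{k+1}&=\mathrm{proj}_{\mathbb{R}^{NM}_+}\big[\lambda^k-\eta\big(L_\lambda\lambda^k+\bar d-\bar A(2\beta^{k+1}-\beta^k)+L_\lambda(2z^{k+1}-z^k)\big)\big]. \end{aligned}$$ For $\omega=(\beta,\psi,\sigma,z,\lambda)$: $$\mathcal A(\omega):=\big(\hat F(\beta,\sigma),\,0,\,\kappa(\sigma-\beta),\,0,\,\bar d+L_\lambda\lambda\big),$$ $$\mathcal B(\omega):=\big(\mathrm N_\Omega(\beta)+\bar A^\top\lambda,\ -L_\sigma\sigma,\ L_\sigma\psi,\ -L_\lambda\lambda,\ \mathrm N_{\mathbb{R}^{NM}_+}(\lambda)-\bar A\beta+L_\lambda z\big),$$ where $\mathrm N_S$ is the normal cone of $S$ (empty outside $S$). Finally, $$\Phi:=\begin{bmatrix}\tau^{-1}&0&0&0&-\bar A^\top\\0&\upsilon^{-1}&L_\sigma&0&0\\0&L_\sigma&\rho^{-1}&0&0\\0&0&0&\delta^{-1}&L_\lambda\\-\bar A&0&0&L_\lambda&\eta^{-1}\end{bmatrix}.$$ *)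

From HB Require Import structures.
From mathcomp Require Import all_boot all_order all_algebra.
From mathcomp Require Import mxtens.
From mathcomp Require Import reals.
Set Implicit Arguments.
Unset Strict Implicit.
Unset Printing Implicit Defensive.
Import Order.TTheory GRing.Theory Num.Theory.
Local Open Scope ring_scope.

(* Kronecker product  A (x) B  (mxtens: index (i,j) |-> i * p + j). *)
Notation kron := tensmx.

Section Setting.
Variable R : realType.

Definition normal_cone {n} (S : 'cV[R]_n -> Prop) (x v : 'cV[R]_n) : Prop :=
  S x /\ forall y, S y -> (v^T *m (y - x)) 0 0 <= 0.

Definition sqnorm {n} (v : 'cV[R]_n) : R := \sum_i (v i 0) ^+ 2.

Definition is_proj {n} (S : 'cV[R]_n -> Prop) (x y : 'cV[R]_n) : Prop :=
  S y /\ forall z, S z -> sqnorm (x - y) <= sqnorm (x - z).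

Definition nonneg {n} (v : 'cV[R]_n) : Prop := forall i, 0 <= v i 0.

Definition diagv {n} (f : 'I_n -> R) : 'M[R]_n := diag_mx (\row_i f i).

(* weighted Laplacian of the graph with weights w (w i j > 0 iff edge {i,j}) *)
Definition laplacian {n} (w : 'I_n -> 'I_n -> R) : 'M[R]_n :=
  \matrix_(i, j) (if i == j then \sum_(k | k != i) w i k else - w i j).

Definition connected_weighted_graph {n} (w : 'I_n -> 'I_n -> R) : Prop :=
  [/\ forall i j, w i j = w j i,
      forall i j, 0 <= w i j,
      forall i, w i i = 0 &
      forall i j, connect (fun k l : 'I_n => 0 < w k l) i j].

Definition posdef {n} (P : 'M[R]_n) : Prop :=
  forall x : 'cV[R]_n, x != 0 -> 0 < (x^T *m P *m x) 0 0.

Record data (N H : nat) := Data {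
  rD : R; alphaD : R;
  aD : 'I_N -> R; bD : 'I_N -> R;
  bloD : R; bhiD : R;                 (* bid bounds *)
  xhatD : 'cV[R]_N;                  (* load capacities *)
  fhatD : 'cV[R]_H;                  (* line capacities *)
  eD : 'cV[R]_N;                     (* net loads *)
  PiD : 'M[R]_(H, N);                (* distribution factors *)
  wD : 'I_N -> 'I_N -> R;            (* communication graph weights *)
  kappaD : R;
  tauD : 'I_N -> R; upsD : 'I_N -> R; rhoD : 'I_N -> R;
  deltaD : 'I_N -> R; etaD : 'I_N -> R }.

Variables (N H : nat) (g : data N H).

(* M = 2N + 2H, written so that the block structure is definitional *)
Definition M : nat := (N + (N + (H + H)))%N.

Definition onev : 'cV[R]_N := const_mx 1.
Definition Am : 'M[R]_N := 1%:M - (N%:R)^-1 *: (onev *m onev^T).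
Definition cv : 'cV[R]_N := (rD g / N%:R) *: onev.

Definition Atil : 'M[R]_(M, N) :=
  col_mx Am (col_mx (- Am) (col_mx (- (PiD g *m Am)) (PiD g *m Am))).

Definition dvec : 'cV[R]_M :=
  col_mx (xhatD g - cv)
    (col_mx cv
      (col_mx (fhatD g - PiD g *m (eD g - cv)) (fhatD g + PiD g *m (eD g - cv)))).

Definition uvec (n : 'I_N) : 'cV[R]_N := delta_mx n 0.

Definition dloc (n : 'I_N) : 'cV[R]_M :=
  (N%:R)^-1 *: col_mx (- cv)
      (col_mx cv (col_mx (fhatD g + PiD g *m cv) (fhatD g - PiD g *m cv)))
  + col_mx (xhatD g n 0 *: uvec n)
      (col_mx 0 (col_mx (- (eD g n 0 *: (PiD g *m uvec n)))
                        (eD g n 0 *: (PiD g *m uvec n)))).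

Definition Omega (be : 'cV[R]_N) : Prop :=
  forall i, bloD g <= be i 0 <= bhiD g.

Definition Kset (be : 'cV[R]_N) : Prop :=
  Omega be /\ forall j, (Atil *m be) j 0 <= dvec j 0.

Definition slater : Prop :=
  exists be, Omega be /\ forall j, (Atil *m be) j 0 < dvec j 0.

Definition Cp (n : 'I_N) (x : R) : R := 2 * aD g n * x + bD g n.

Definition Fmap (be : 'cV[R]_N) : 'cV[R]_N :=
  \col_n ((N%:R - 1) / N%:R * Cp n ((rD g - \sum_i be i 0) / N%:R + be n 0)
          + ((\sum_i be i 0 - rD g) * (N%:R - 2) + N%:R * be n 0)
            / (alphaD g * N%:R ^+ 2)).

Definition Fhat (be si : 'cV[R]_N) : 'cV[R]_N :=
  \col_n ((N%:R - 1) / N%:R * Cp n ((rD g - N%:R * si n 0) / N%:R + be n 0)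
          + ((N%:R * si n 0 - rD g) * (N%:R - 2) + N%:R * be n 0)
            / (alphaD g * N%:R ^+ 2)).

Definition vGNE (bs : 'cV[R]_N) : Prop :=
  Kset bs /\ forall be, Kset be -> 0 <= ((be - bs)^T *m Fmap bs) 0 0.

Definition Lsig : 'M[R]_N := laplacian (wD g).
Definition Llam : 'M[R]_(N * M) := kron Lsig (1%:M : 'M[R]_M).

(* bar A = blkdiag(tilde A_1, ..., tilde A_N) *)
Definition Abar : 'M[R]_(N * M, N) :=
  \matrix_(k, n) (if (mxtens_unindex k).1 == n
                  then Atil (mxtens_unindex k).2 n else 0).

(* bar d = col(d_1, ..., d_N) *)
Definition dbar : 'cV[R]_(N * M) :=
  \col_k dloc (mxtens_unindex k).1 (mxtens_unindex k).2 0.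

Definition taum : 'M[R]_N := diagv (tauD g).
Definition upsm : 'M[R]_N := diagv (upsD g).
Definition rhom : 'M[R]_N := diagv (rhoD g).
Definition deltam : 'M[R]_(N * M) := kron (diagv (deltaD g)) (1%:M : 'M[R]_M).
Definition etam : 'M[R]_(N * M) := kron (diagv (etaD g)) (1%:M : 'M[R]_M).

Definition Dim : nat := (N + N + N + N * M + N * M)%N.

Definition mkom (be ps si : 'cV[R]_N) (z la : 'cV[R]_(N * M)) : 'cV[R]_Dim :=
  col_mx (col_mx (col_mx (col_mx be ps) si) z) la.

Definition om_beta (om : 'cV[R]_Dim) : 'cV[R]_N :=
  usubmx (usubmx (usubmx (usubmx om))).
Definition om_psi (om : 'cV[R]_Dim) : 'cV[R]_N :=
  dsubmx (usubmx (usubmx (usubmx om))).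
Definition om_sigma (om : 'cV[R]_Dim) : 'cV[R]_N :=
  dsubmx (usubmx (usubmx om)).
Definition om_z (om : 'cV[R]_Dim) : 'cV[R]_(N * M) := dsubmx (usubmx om).
Definition om_lambda (om : 'cV[R]_Dim) : 'cV[R]_(N * M) := dsubmx om.

Definition Phi : 'M[R]_Dim :=
  block_mx
    (block_mx
       (block_mx (block_mx (invmx taum) 0 0 (invmx upsm))
                 (col_mx 0 Lsig) (row_mx 0 Lsig) (invmx rhom))
       0 0 (invmx deltam))
    (col_mx (col_mx (col_mx (- Abar^T) 0) 0) Llam)
    (row_mx (row_mx (row_mx (- Abar) 0) 0) Llam)
    (invmx etam).

Definition Aop (om : 'cV[R]_Dim) : 'cV[R]_Dim :=
  let be := om_beta om in let si := om_sigma om in let la := om_lambda om in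
  mkom (Fhat be si) 0 (kappaD g *: (si - be)) 0 (dbar + Llam *m la).

(* set-valued operator B:  Bop om v  <->  v \in B(om) *)
Definition Bop (om v : 'cV[R]_Dim) : Prop :=
  let be := om_beta om in let ps := om_psi om in let si := om_sigma om in
  let z := om_z om in let la := om_lambda om in
  exists nb nl,
    normal_cone Omega be nb /\ normal_cone nonneg la nl /\
    v = mkom (nb + Abar^T *m la) (- (Lsig *m si)) (Lsig *m ps)
             (- (Llam *m la)) (nl - Abar *m be + Llam *m z).

Definition zero_in_AB (om : 'cV[R]_Dim) : Prop :=
  exists v, Bop om v /\ Aop om + v = 0.

Definition Uop (om : 'cV[R]_Dim) : 'cV[R]_Dim := om - invmx Phi *m Aop om.

(* V_rel x y  <->  y \in V_Phi(x) = (Id + Phi^{-1} B)^{-1}(x),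
   i.e. x \in y + Phi^{-1} B(y) *)
Definition Vrel (x y : 'cV[R]_Dim) : Prop :=
  exists v, Bop y v /\ x = y + invmx Phi *m v.

Definition IT (om om' : 'cV[R]_Dim) : Prop :=
  let be := om_beta om in let ps := om_psi om in let si := om_sigma om in
  let z := om_z om in let la := om_lambda om in
  let be' := om_beta om' in let ps' := om_psi om' in let si' := om_sigma om' in
  let z' := om_z om' in let la' := om_lambda om' in
  [/\ is_proj Omega (be - taum *m (Fhat be si + Abar^T *m la)) be',
      ps' = ps + upsm *m (Lsig *m si),
      si' = si + rhom *m (kappaD g *: (be - si) - Lsig *m (2%:R *: ps' - ps)),
      z' = z + deltam *m (Llam *m la) &
      is_proj nonneg
        (la - etam *m (Llam *m la + dbar - Abar *m (2%:R *: be' - be)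
                       + Llam *m (2%:R *: z' - z))) la'].

End Setting.

From mathcomp Require Import all_boot all_order all_algebra.
From mathcomp Require Import mxtens.
From mathcomp Require Import reals.
From mathcomp Require Import ring lra.
Import Order.TTheory GRing.Theory Num.Theory.
Local Open Scope ring_scope.
Set Implicit Arguments.
Unset Strict Implicit.
Unset Printing Implicit Defensive.

(* Parts (i)-(iii) rest on one computation.  Since the off-diagonal blocks of
   Phi are exactly the couplings that (IT) evaluates at the new iterate, the
   inclusion Phi (x - y) - a \in B(y) can be solved block by block: the beta
   block is a projection onto the box Omega, the psi, sigma and z blocks are
   explicit updates (sigma using the new psi), and the lambda block is a
   projection onto the nonnegative orthant (using the new beta and z).  Both
   projections are coordinatewise clamps, hence exist and are unique, so V_Phi
   is single-valued; with a = A(omega^k) these equations are (IT), and with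
   x = y they say 0 \in (A + B)(y).
   For (iv), a zero of A + B has L sigma = 0 and L_lambda lambda = 0, so sigma
   and lambda are in consensus over the connected graph, and summing the psi
   equation identifies sigma with the mean of beta.  Summing the lambda block
   over the agents cancels the Laplacian terms and turns the local d_n into d,
   leaving A~ beta - d as the sum of the agents' normal-cone multipliers; these
   are nonpositive and complementary to the common multiplier gamma, which
   yields feasibility, and pairing the beta block with beta - beta* yields the
   variational inequality for F. *)

Section MatrixFacts.
Variable R : realType.

Lemma mxNE m n (A : 'M[R]_(m, n)) i j : (- A) i j = - A i j.
Proof. by rewrite mxE. Qed.

Lemma mxBE m n (A B : 'M[R]_(m, n)) i j : (A - B) i j = A i j - B i j.
Proof. by rewrite !mxE. Qed.

Lemma diagv_mulE n (f : 'I_n -> R) (v : 'cV[R]_n) i :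
  (diagv f *m v) i 0 = f i * v i 0.
Proof. by rewrite /diagv mul_diag_mx !mxE. Qed.

Lemma diagvM n (f h : 'I_n -> R) :
  diagv f *m diagv h = diagv (fun i => f i * h i).
Proof.
apply/matrixP=> i j; rewrite /diagv mul_diag_mx !mxE.
by case: eqP => _; rewrite ?mulr0n ?mulr0 ?mulr1n.
Qed.

Lemma diagv_unit_inv n (f : 'I_n -> R) : (forall i, f i != 0) ->
  diagv f \in unitmx /\ invmx (diagv f) = diagv (fun i => (f i)^-1).
Proof.
move=> f_neq0.
have fVf : diagv f *m diagv (fun i => (f i)^-1) = 1%:M.
  by apply/matrixP=> i j; rewrite diagvM /diagv !mxE mulfV.
have [f_unit _] := mulmx1_unit fVf; split => //.
by rewrite -[invmx _]mulmx1 -fVf mulmxA mulVmx // mul1mx.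
Qed.

Lemma diagv_pos_unit_inv n (f : 'I_n -> R) : (forall i, 0 < f i) ->
  diagv f \in unitmx /\ invmx (diagv f) = diagv (fun i => (f i)^-1).
Proof. by move=> f_gt0; apply: diagv_unit_inv => i; rewrite gt_eqF. Qed.

Lemma tensmx_diagv1 n m (f : 'I_n -> R) :
  tensmx (diagv f) (1%:M : 'M[R]_m) = diagv (fun k => f (mxtens_unindex k).1).
Proof.
apply/matrixP=> i j; rewrite -(mxtens_unindexK i) -(mxtens_unindexK j).
case: (mxtens_unindex i) (mxtens_unindex j) => [a b] [c d].
rewrite tensmxE /diagv !mxE mxtens_indexK /=.
rewrite (inj_eq (can_inj (@mxtens_indexK _ _))) xpair_eqE.
by case: (a == c); case: (b == d); rewrite ?mulr0n ?mulr1n ?mulr1 ?mulr0.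
Qed.

Lemma sum_mxtens_index m n (F : 'I_(m * n) -> R) :
  \sum_k F k = \sum_i \sum_j F (mxtens_index (i, j)).
Proof.
rewrite pair_big /= (reindex (@mxtens_index m n)) /=; last first.
  by exists (@mxtens_unindex m n) => x _; rewrite (mxtens_indexK, mxtens_unindexK).
by apply: eq_bigr => -[i j].
Qed.

Lemma tensmx_const1E n m (x : 'cV[R]_m) i j :
  tensmx (const_mx 1 : 'cV[R]_n) x (mxtens_index (i, j)) 0 = x j 0.
Proof.
rewrite mxE mxtens_indexK; case: (mxtens_unindex _) => k l.
by rewrite !mxE mul1r (ord1 l).
Qed.

Lemma tensmx1_mulE n m (L : 'M[R]_n) (x : 'cV[R]_(n * m)) i j :
  (tensmx L 1%:M *m x) (mxtens_index (i, j)) 0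
  = \sum_k L i k * x (mxtens_index (k, j)) 0.
Proof.
rewrite mxE sum_mxtens_index; apply: eq_bigr => k _.
rewrite (bigD1 j) //= big1 ?addr0 => [|j' j'j]; rewrite tensmxE mxE ?eqxx ?mulr1 //.
by rewrite eq_sym (negbTE j'j) mulr0 mul0r.
Qed.

Lemma invmx_step_eq0 n (D : 'M[R]_n) (x y c : 'cV[R]_n) : D \in unitmx ->
  invmx D *m (x - y) + c = 0 <-> y = x + D *m c.
Proof.
move=> D_unit; split=> [step0|->].
  have := congr1 (mulmx D) step0; rewrite mulmxDr mulmxA mulmxV // mul1mx mulmx0.
  by move/eqP; rewrite addrAC subr_eq0 => /eqP <-.
by rewrite opprD addNKr mulmxN mulmxA mulVmx // mul1mx addNr.
Qed.

Lemma eq_iff_diff_eq0 m n (X Y W : 'M[R]_(m, n)) : X - Y = W -> (X = Y <-> W = 0).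
Proof. by move=> <-; split=> [->|/eqP]; rewrite ?subrr // subr_eq0 => /eqP. Qed.

End MatrixFacts.

Section CoordinatewiseSets.
Variable R : realType.

Definition coordwise n (P : R -> Prop) (x : 'cV[R]_n) := forall i, P (x i 0).

Lemma dotmx_sum n (v z : 'cV[R]_n) : (v^T *m z) 0 0 = \sum_i v i 0 * z i 0.
Proof. by rewrite !mxE; apply: eq_bigr => i _; rewrite !mxE. Qed.

Lemma dotmxC n (v z : 'cV[R]_n) : (v^T *m z) 0 0 = (z^T *m v) 0 0.
Proof. by rewrite !dotmx_sum; apply: eq_bigr => i _; rewrite mulrC. Qed.

Lemma set_entryE n (y : 'cV[R]_n) i c k :
  (y + (c - y i 0) *: delta_mx i 0) k 0 = if k == i then c else y k 0.
Proof.
rewrite !mxE eqxx andbT; case: eqVneq => [->|_]; last by rewrite mulr0 addr0.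
by rewrite mulr1 addrC subrK.
Qed.

Lemma set_entry_coordwise n (P : R -> Prop) (y : 'cV[R]_n) i c :
  coordwise P y -> P c -> coordwise P (y + (c - y i 0) *: delta_mx i 0).
Proof. by move=> Py Pc k; rewrite set_entryE; case: eqP. Qed.

Lemma normal_cone_coordwise n (P : R -> Prop) (y v : 'cV[R]_n) :
  normal_cone (coordwise P) y v <->
  coordwise P y /\ forall i t, P t -> v i 0 * (t - y i 0) <= 0.
Proof.
split=> -[Py nc_v]; split=> //; last first.
  by move=> z Pz; rewrite dotmx_sum; apply: sumr_le0 => i _; rewrite !mxE; apply: nc_v.
move=> i t Pt; pose z := y + (t - y i 0) *: delta_mx i 0.
have := nc_v z (set_entry_coordwise i Py Pt).
rewrite dotmx_sum (bigD1 i) //= big1 ?addr0 => [|k ki].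
  by rewrite [(z - y) i 0]mxE [(- y) i 0]mxE /z set_entryE eqxx.
by rewrite [(z - y) k 0]mxE [(- y) k 0]mxE /z set_entryE (negPf ki) subrr mulr0.
Qed.

Lemma normal_cone_nonneg_compl n (y v : 'cV[R]_n) :
  normal_cone (@nonneg R n) y v ->
  forall i, [/\ 0 <= y i 0, v i 0 <= 0 & v i 0 * y i 0 = 0].
Proof.
move=> /(normal_cone_coordwise (fun t => 0 <= t)) [y_ge0 vi] i.
have v_le0 : v i 0 <= 0.
  by have := vi i (y i 0 + 1); rewrite addrAC subrr add0r mulr1; apply; rewrite addr_ge0.
split=> //; have := vi i 0 (lexx 0); have := y_ge0 i; nra.
Qed.

Section ScalarProjection.
Variables (P : R -> Prop) (cl : R -> R).
Hypothesis cl_mem : forall w, P (cl w).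
Hypothesis cl_vi : forall w y, P y ->
  ((forall t, P t -> (w - y) * (t - y) <= 0) <-> y = cl w).

Lemma cl_pythagoras w t : P t -> (w - cl w) ^+ 2 + (cl w - t) ^+ 2 <= (w - t) ^+ 2.
Proof.
move=> Pt; have vi := proj2 (cl_vi w (cl_mem w)) erefl t Pt.
rewrite !expr2; nra.
Qed.

Lemma is_proj_coordwise n (w y : 'cV[R]_n) :
  is_proj (coordwise P) w y <-> forall i, y i 0 = cl (w i 0).
Proof.
split=> [[Py y_min] i | y_cl].
  pose z := y + (cl (w i 0) - y i 0) *: delta_mx i 0.
  have := y_min z (set_entry_coordwise i Py (cl_mem _)).
  rewrite /sqnorm (bigD1 i) //= [X in _ <= X](bigD1 i) //=.
  have -> : \sum_(k < n | k != i) (w - z) k 0 ^+ 2 = \sum_(k < n | k != i) (w - y) k 0 ^+ 2.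
    apply: eq_bigr => k ki.
    by rewrite [(w - z) k 0]mxE [(- z) k 0]mxE /z set_entryE (negPf ki) !mxE.
  rewrite lerD2r [(w - z) i 0]mxE [(- z) i 0]mxE /z set_entryE eqxx !mxE => le_wy.
  have pyth := cl_pythagoras (w i 0) (Py i).
  apply/eqP; rewrite -subr_eq0 -sqrf_eq0 eq_le sqr_ge0 andbT -sqrrN opprB; lra.
split=> [i|z Pz]; first by rewrite y_cl.
rewrite /sqnorm; apply: ler_sum => i _; rewrite !mxE y_cl.
by have := cl_pythagoras (w i 0) (Pz i); have := sqr_ge0 (cl (w i 0) - z i 0); lra.
Qed.

Lemma normal_cone_diag_coordwise n (f : 'I_n -> R) (w y : 'cV[R]_n) :
  (forall i, 0 < f i) ->
  normal_cone (coordwise P) y (diagv f *m (w - y)) <->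
  forall i, y i 0 = cl (w i 0).
Proof.
move=> f_gt0; rewrite normal_cone_coordwise.
have vi_iff i t : (diagv f *m (w - y)) i 0 * (t - y i 0) <= 0 <->
                  (w i 0 - y i 0) * (t - y i 0) <= 0.
  by rewrite diagv_mulE !mxE -mulrA pmulr_rle0.
split=> [[Py nc_v] i | y_cl].
  by apply/(cl_vi _ (Py i)) => t Pt; apply/vi_iff/nc_v.
split=> [i|i t Pt]; first by rewrite y_cl.
by apply/vi_iff; move: t Pt; apply/(cl_vi _ _); rewrite y_cl.
Qed.

Lemma normal_cone_diag_is_proj n (f : 'I_n -> R) (w y : 'cV[R]_n) :
  (forall i, 0 < f i) ->
  normal_cone (coordwise P) y (diagv f *m (w - y)) <-> is_proj (coordwise P) w y.
Proof. by move=> f_gt0; rewrite normal_cone_diag_coordwise // is_proj_coordwise. Qed.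

Lemma is_proj_coordwise_ex_uniq n (w : 'cV[R]_n) :
  exists! y, is_proj (coordwise P) w y.
Proof.
exists (\col_i cl (w i 0)); split=> [|y /is_proj_coordwise y_cl].
  by apply/is_proj_coordwise => i; rewrite mxE.
by apply/matrixP=> i j; rewrite (ord1 j) mxE y_cl.
Qed.

End ScalarProjection.
End CoordinatewiseSets.

Section Clamps.
Variable R : realType.

Definition clamp (lo hi w : R) := if w < lo then lo else if hi < w then hi else w.
Definition pos_part (w : R) := if w < 0 then 0 else w.

Lemma clamp_mem lo hi w : lo <= hi -> lo <= clamp lo hi w <= hi.
Proof. by rewrite /clamp => lohi; case: ltP => ?; [|case: ltP => ?]; apply/andP; lra. Qed.

Lemma clamp_vi lo hi w y : lo <= hi -> lo <= y <= hi ->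
  (forall t, lo <= t <= hi -> (w - y) * (t - y) <= 0) <-> y = clamp lo hi w.
Proof.
rewrite /clamp => lohi /andP[ylo yhi]; split=> [vi | -> t /andP[tlo thi]].
  case: ltP => wlo; [|case: ltP => whi].
  - by have := vi lo; rewrite lexx lohi => /(_ isT); nra.
  - by have := vi hi; rewrite lexx lohi => /(_ isT); nra.
  - by have := vi w; rewrite wlo whi => /(_ isT); nra.
by case: ltP => ?; [|case: ltP => ?]; nra.
Qed.

Lemma pos_part_ge0 w : 0 <= pos_part w.
Proof. by rewrite /pos_part; case: ltP => ?; lra. Qed.

Lemma pos_part_vi w y : 0 <= y ->
  (forall t, 0 <= t -> (w - y) * (t - y) <= 0) <-> y = pos_part w.
Proof.
rewrite /pos_part => y_ge0; split=> [vi | -> t t_ge0].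
  case: ltP => w0.
  - by have := vi 0 (lexx 0); nra.
  - by have := vi w w0; nra.
by case: ltP => ?; nra.
Qed.

End Clamps.

Section Laplacian.
Variables (R : realType) (n : nat) (w : 'I_n -> 'I_n -> R).

Lemma laplacian_mulE (x : 'cV[R]_n) i :
  (laplacian w *m x) i 0 = \sum_k w i k * (x i 0 - x k 0).
Proof.
rewrite mxE (bigD1 i) //= [RHS](bigD1 i) //= subrr mulr0 add0r mxE eqxx.
rewrite big_distrl /= [RHS](eq_bigr (fun k => w i k * x i 0 - w i k * x k 0)).
  rewrite sumrB -sumrN; congr (_ + _); apply: eq_bigr => k ki.
  by rewrite mxE eq_sym (negbTE ki) mulNr.
by move=> k _; rewrite mulrBr.
Qed.

Hypothesis w_sym : forall i j, w i j = w j i.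

Lemma sum_laplacian_col m : \sum_i laplacian w i m = 0.
Proof.
rewrite (bigD1 m) //= mxE eqxx [X in _ + X](eq_bigr (fun i => - w m i)) ?sumrN ?subrr //.
by move=> i im; rewrite mxE (negbTE im) w_sym.
Qed.

Lemma sum_laplacian_mul (x : 'cV[R]_n) : \sum_i (laplacian w *m x) i 0 = 0.
Proof.
rewrite (eq_bigr (fun i => \sum_k laplacian w i k * x k 0)) => [|i _]; last by rewrite mxE.
rewrite exchange_big big1 //= => k _.
by rewrite -big_distrl /= sum_laplacian_col mul0r.
Qed.

Lemma laplacian_dirichlet (x : 'cV[R]_n) :
  2 * \sum_i x i 0 * (laplacian w *m x) i 0
  = \sum_i \sum_k w i k * (x i 0 - x k 0) ^+ 2.
Proof.
have swap : \sum_i \sum_k w i k * (x i 0 * (x i 0 - x k 0))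
          = \sum_i \sum_k w i k * (x k 0 * (x k 0 - x i 0)).
  by rewrite exchange_big; apply: eq_bigr => i _; apply: eq_bigr => k _; rewrite w_sym.
have -> : \sum_i x i 0 * (laplacian w *m x) i 0
        = \sum_i \sum_k w i k * (x i 0 * (x i 0 - x k 0)).
  apply: eq_bigr => i _; rewrite laplacian_mulE big_distrr.
  by apply: eq_bigr => k _; rewrite mulrCA.
rewrite mulr2n mulrDl mul1r {2}swap -big_split /=.
by apply: eq_bigr => i _; rewrite -big_split /=; apply: eq_bigr => k _; ring.
Qed.

Lemma sum_tensmx_laplacian_mul m (z : 'cV[R]_(n * m)) j :
  \sum_i (tensmx (laplacian w) 1%:M *m z) (mxtens_index (i, j)) 0 = 0.
Proof.
under eq_bigr do rewrite tensmx1_mulE.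
rewrite exchange_big big1 //= => k _.
by rewrite -big_distrl /= sum_laplacian_col mul0r.
Qed.

Hypothesis w_conn : connected_weighted_graph w.

Lemma laplacian_ker_consensus (x : 'cV[R]_n) :
  laplacian w *m x = 0 -> forall i j, x i 0 = x j 0.
Proof.
case: w_conn => _ w_ge0 _ conn Lx0.
have term_ge0 i k : 0 <= w i k * (x i 0 - x k 0) ^+ 2 by rewrite mulr_ge0 ?sqr_ge0.
have energy0 : \sum_i \sum_k w i k * (x i 0 - x k 0) ^+ 2 = 0.
  by rewrite -laplacian_dirichlet Lx0 big1 ?mulr0 // => i _; rewrite mxE mulr0.
have edge_eq k l : 0 < w k l -> x k 0 = x l 0.
  move=> wkl; have /psumr_eq0P := energy0.
  move=> /(_ (fun i _ => sumr_ge0 _ (fun k _ => term_ge0 i k)) k isT) /psumr_eq0P.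
  move=> /(_ (fun l _ => term_ge0 k l) l isT) /eqP.
  by rewrite mulf_eq0 gt_eqF //= sqrf_eq0 subr_eq0 => /eqP.
move=> i j; have cl : closed (fun k l : 'I_n => 0 < w k l) [pred k | x k 0 == x i 0].
  by move=> k l /edge_eq e; rewrite !inE e.
by have := closed_connect cl (conn i j); rewrite !inE eqxx => /esym/eqP.
Qed.

Lemma laplacian_ker_const (x : 'cV[R]_n) i0 :
  laplacian w *m x = 0 -> x = x i0 0 *: const_mx 1.
Proof.
move=> Lx0; apply/matrixP=> i j; rewrite (ord1 j) !mxE mulr1.
exact: laplacian_ker_consensus.
Qed.

Lemma tensmx_laplacian_ker m (z : 'cV[R]_(n * m)) i0 :
  tensmx (laplacian w) 1%:M *m z = 0 ->
  z = tensmx (const_mx 1 : 'cV[R]_n) (\col_j z (mxtens_index (i0, j)) 0).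
Proof.
move=> Lz0; apply/matrixP=> k c; rewrite (ord1 c) -(mxtens_unindexK k).
case: (mxtens_unindex k) => i j; rewrite tensmx_const1E mxE.
pose zj := \col_l z (mxtens_index (l, j)) 0.
have Lzj0 : laplacian w *m zj = 0.
  apply/matrixP=> l c0; rewrite (ord1 c0) [RHS]mxE.
  have := congr1 (fun v : 'cV[R]_(n * m) => v (mxtens_index (l, j)) 0) Lz0.
  rewrite tensmx1_mulE mxE => <-; rewrite mxE.
  by apply: eq_bigr => l' _; rewrite /zj [X in _ * X = _]mxE.
by have := laplacian_ker_consensus Lzj0 i i0; rewrite !mxE.
Qed.

End Laplacian.

Section StackedVectors.
Variables (R : realType) (N H : nat) (g : data R N H).
Implicit Types (be ps si : 'cV[R]_N) (z la : 'cV[R]_(N * M N H)).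

Lemma om_mkomE be ps si z la :
  (om_beta (mkom be ps si z la) = be) * (om_psi (mkom be ps si z la) = ps) *
  (om_sigma (mkom be ps si z la) = si) * (om_z (mkom be ps si z la) = z) *
  (om_lambda (mkom be ps si z la) = la).
Proof. by rewrite /om_beta /om_psi /om_sigma /om_z /om_lambda /mkom !col_mxKu !col_mxKd. Qed.

Lemma mkom_om (om : 'cV[R]_(Dim N H)) :
  om = mkom (om_beta om) (om_psi om) (om_sigma om) (om_z om) (om_lambda om).
Proof. by rewrite /om_beta /om_psi /om_sigma /om_z /om_lambda /mkom !vsubmxK. Qed.

Lemma mkom0 : mkom 0 0 0 0 0 = 0 :> 'cV[R]_(Dim N H).
Proof. by rewrite /mkom !col_mx0. Qed.

Lemma mkomB be ps si z la be' ps' si' z' la' :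
  mkom be ps si z la - mkom be' ps' si' z' la'
  = mkom (be - be') (ps - ps') (si - si') (z - z') (la - la').
Proof. by rewrite /mkom !opp_col_mx !add_col_mx. Qed.

Lemma mkomN be ps si z la : - mkom be ps si z la = mkom (- be) (- ps) (- si) (- z) (- la).
Proof. by rewrite /mkom !opp_col_mx. Qed.

Lemma Phi_mkom be ps si z la :
  Phi g *m mkom be ps si z la =
  mkom (invmx (taum g) *m be - (Abar g)^T *m la)
       (invmx (upsm g) *m ps + Lsig g *m si)
       (Lsig g *m ps + invmx (rhom g) *m si)
       (invmx (deltam g) *m z + Llam g *m la)
       (- (Abar g *m be) + Llam g *m z + invmx (etam g) *m la).
Proof.
rewrite /Phi /mkom !mul_block_col !mul_row_col !mul_col_mx !mul0mx ?mulmx0.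
by rewrite !addr0 ?add0r !add_col_mx ?addr0 ?add0r ?mulNmx.
Qed.

Lemma Bop_iff (y v : 'cV[R]_(Dim N H)) :
  Bop g y v <->
  [/\ normal_cone (Omega g) (om_beta y) (om_beta v - (Abar g)^T *m om_lambda y),
      om_psi v = - (Lsig g *m om_sigma y),
      om_sigma v = Lsig g *m om_psi y,
      om_z v = - (Llam g *m om_lambda y) &
      normal_cone (@nonneg R _) (om_lambda y)
        (om_lambda v + Abar g *m om_beta y - Llam g *m om_z y)].
Proof.
split=> [[nb [nl [nc_b [nc_l ->]]]] | [nc_b vp vs vz nc_l]].
  rewrite !om_mkomE addrK; split=> //; congr (normal_cone _ _ _): nc_l.
  by apply/matrixP=> i j; rewrite !mxE; lra.
exists (om_beta v - (Abar g)^T *m om_lambda y).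
exists (om_lambda v + Abar g *m om_beta y - Llam g *m om_z y).
split=> //; split=> //.
rewrite {1}(mkom_om v) vp vs vz; congr mkom; apply/matrixP=> i j; rewrite !mxE; lra.
Qed.

End StackedVectors.

Section ResolventStep.
Variables (R : realType) (N H : nat) (g : data R N H).
Hypothesis tau_gt0 : forall n, 0 < tauD g n.
Hypothesis ups_gt0 : forall n, 0 < upsD g n.
Hypothesis rho_gt0 : forall n, 0 < rhoD g n.
Hypothesis delta_gt0 : forall n, 0 < deltaD g n.
Hypothesis eta_gt0 : forall n, 0 < etaD g n.
Hypothesis lo_le_hi : bloD g <= bhiD g.

Let tau_diag := diagv_pos_unit_inv tau_gt0.
Let ups_unit := (diagv_pos_unit_inv ups_gt0).1.
Let rho_unit := (diagv_pos_unit_inv rho_gt0).1.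
Let delta_unit : deltam g \in unitmx.
Proof.
rewrite /deltam tensmx_diagv1.
exact: (diagv_pos_unit_inv (fun k => delta_gt0 (mxtens_unindex k).1)).1.
Qed.
Let eta_diag : etam g \in unitmx /\
  invmx (etam g) = diagv (fun k : 'I_(N * M N H) => (etaD g (mxtens_unindex k).1)^-1).
Proof.
rewrite /etam tensmx_diagv1.
exact: (diagv_pos_unit_inv (fun k => eta_gt0 (mxtens_unindex k).1)).
Qed.

Lemma normal_cone_Omega_is_proj (w y : 'cV[R]_N) :
  normal_cone (Omega g) y (invmx (taum g) *m (w - y)) <-> is_proj (Omega g) w y.
Proof.
rewrite tau_diag.2; apply: (@normal_cone_diag_is_proj _ (fun t => bloD g <= t <= bhiD g)
                                     (clamp (bloD g) (bhiD g))).
- by move=> t; apply: clamp_mem.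
- by move=> t u; apply: clamp_vi.
- by move=> i; rewrite invr_gt0.
Qed.

Lemma normal_cone_nonneg_is_proj (w y : 'cV[R]_(N * M N H)) :
  normal_cone (@nonneg R _) y (invmx (etam g) *m (w - y)) <-> is_proj (@nonneg R _) w y.
Proof.
rewrite eta_diag.2; apply: (@normal_cone_diag_is_proj _ (fun t => 0 <= t) (@pos_part R)).
- exact: pos_part_ge0.
- exact: pos_part_vi.
- by move=> i; rewrite invr_gt0.
Qed.

Lemma is_proj_Omega_ex_uniq (w : 'cV[R]_N) : exists! y, is_proj (Omega g) w y.
Proof.
apply: (@is_proj_coordwise_ex_uniq _ (fun t => bloD g <= t <= bhiD g)
                                    (clamp (bloD g) (bhiD g))).
- by move=> t; apply: clamp_mem.
- by move=> t u; apply: clamp_vi.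
Qed.

Lemma is_proj_nonneg_ex_uniq (w : 'cV[R]_(N * M N H)) :
  exists! y, is_proj (@nonneg R _) w y.
Proof.
apply: (@is_proj_coordwise_ex_uniq _ (fun t => 0 <= t) (@pos_part R)).
- exact: pos_part_ge0.
- exact: pos_part_vi.
Qed.

Lemma Bop_Phi_step (x y a : 'cV[R]_(Dim N H)) :
  Bop g y (Phi g *m (x - y) - a) <->
  [/\ is_proj (Omega g)
        (om_beta x - taum g *m (om_beta a + (Abar g)^T *m om_lambda x)) (om_beta y),
      om_psi y = om_psi x + upsm g *m (Lsig g *m om_sigma x - om_psi a),
      om_sigma y = om_sigma x
                   - rhom g *m (om_sigma a + Lsig g *m (2%:R *: om_psi y - om_psi x)),
      om_z y = om_z x + deltam g *m (Llam g *m om_lambda x - om_z a) &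
      is_proj (@nonneg R _)
        (om_lambda x + etam g *m (Abar g *m (2%:R *: om_beta y - om_beta x)
           - Llam g *m (2%:R *: om_z y - om_z x) - om_lambda a)) (om_lambda y)].
Proof.
rewrite Bop_iff (mkom_om x) (mkom_om y) (mkom_om a) mkomB Phi_mkom mkomB !om_mkomE.
set xb := om_beta x; set xp := om_psi x; set xs := om_sigma x.
set xz := om_z x; set xl := om_lambda x.
set yb := om_beta y; set yp := om_psi y; set ys := om_sigma y.
set yz := om_z y; set yl := om_lambda y.
have -> : invmx (taum g) *m (xb - yb) - (Abar g)^T *m (xl - yl) - om_beta a
          - (Abar g)^T *m yl
        = invmx (taum g) *m (xb - taum g *m (om_beta a + (Abar g)^T *m xl) - yb).
  rewrite !mulmxBr !mulmxDr !mulmxA mulVmx ?tau_diag.1 // !mul1mx.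
  by apply/matrixP=> i j; rewrite !mxE; lra.
have -> : - (Abar g *m (xb - yb)) + Llam g *m (xz - yz) + invmx (etam g) *m (xl - yl)
          - om_lambda a + Abar g *m yb - Llam g *m yz
        = invmx (etam g) *m (xl + etam g *m (Abar g *m (2%:R *: yb - xb)
             - Llam g *m (2%:R *: yz - xz) - om_lambda a) - yl).
  rewrite !(mulmxBr, mulmxDr) -!scalemxAr !mulmxA mulVmx ?eta_diag.1 // !mul1mx.
  by apply/matrixP=> i j; rewrite !mxE; lra.
have psi_iff : invmx (upsm g) *m (xp - yp) + Lsig g *m (xs - ys) - om_psi a
                 = - (Lsig g *m ys) <-> yp = xp + upsm g *m (Lsig g *m xs - om_psi a).
  rewrite -invmx_step_eq0 //; apply: eq_iff_diff_eq0.
  by rewrite !mulmxBr; apply/matrixP=> i j; rewrite !mxE; lra.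
have sigma_iff : Lsig g *m (xp - yp) + invmx (rhom g) *m (xs - ys) - om_sigma a
                   = Lsig g *m yp <->
                 ys = xs - rhom g *m (om_sigma a + Lsig g *m (2%:R *: yp - xp)).
  rewrite -mulmxN -invmx_step_eq0 //; apply: eq_iff_diff_eq0.
  by rewrite !mulmxBr -scalemxAr; apply/matrixP=> i j; rewrite !mxE; lra.
have z_iff : invmx (deltam g) *m (xz - yz) + Llam g *m (xl - yl) - om_z a
               = - (Llam g *m yl) <-> yz = xz + deltam g *m (Llam g *m xl - om_z a).
  rewrite -invmx_step_eq0 //; apply: eq_iff_diff_eq0.
  by rewrite !mulmxBr; apply/matrixP=> i j; rewrite !mxE; lra.
split=> -[/normal_cone_Omega_is_proj ? /psi_iff ? /sigma_iff ? /z_iff ?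
          /normal_cone_nonneg_is_proj ?]; by split.
Qed.

End ResolventStep.

Lemma posdef_unit (R : realType) n (P : 'M[R]_n) : posdef P -> P \in unitmx.
Proof.
move=> P_pd; rewrite -row_free_unit; apply: inj_row_free => v vP0.
apply/eqP; apply: contraT => v_neq0.
have : v^T != 0 by rewrite -trmx0 (inj_eq trmx_inj).
by move/P_pd; rewrite trmxK vP0 mul0mx mxE ltxx.
Qed.

Section ForwardBackward.
Variables (R : realType) (N H : nat) (g : data R N H).
Hypothesis tau_gt0 : forall n, 0 < tauD g n.
Hypothesis ups_gt0 : forall n, 0 < upsD g n.
Hypothesis rho_gt0 : forall n, 0 < rhoD g n.
Hypothesis delta_gt0 : forall n, 0 < deltaD g n.
Hypothesis eta_gt0 : forall n, 0 < etaD g n.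
Hypothesis lo_le_hi : bloD g <= bhiD g.
Hypothesis Phi_unit : Phi g \in unitmx.

Let step := Bop_Phi_step tau_gt0 ups_gt0 rho_gt0 delta_gt0 eta_gt0 lo_le_hi.

Lemma Vrel_iff x y : Vrel g x y <-> Bop g y (Phi g *m (x - y)).
Proof.
split=> [[v [Byv ->]] | Bxy]; first by rewrite addrC addKr mulmxA mulmxV // mul1mx.
exists (Phi g *m (x - y)); split=> //.
by rewrite mulmxA mulVmx // mul1mx addrC subrK.
Qed.

Lemma Vrel_ex_uniq x : exists! y, Vrel g x y.
Proof.
have Vrel_step y : Vrel g x y <-> Bop g y (Phi g *m (x - y) - 0).
  by rewrite subr0 Vrel_iff.
have om0 := om_mkomE (0 : 'cV[R]_N) 0 0 (0 : 'cV[R]_(N * M N H)) 0; rewrite mkom0 in om0.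
have [yb [yb_proj yb_uniq]] := is_proj_Omega_ex_uniq lo_le_hi
  (om_beta x - taum g *m (0 + (Abar g)^T *m om_lambda x)).
pose yp := om_psi x + upsm g *m (Lsig g *m om_sigma x - 0).
pose ys := om_sigma x - rhom g *m (0 + Lsig g *m (2%:R *: yp - om_psi x)).
pose yz := om_z x + deltam g *m (Llam g *m om_lambda x - 0).
have [yl [yl_proj yl_uniq]] := is_proj_nonneg_ex_uniq (om_lambda x
  + etam g *m (Abar g *m (2%:R *: yb - om_beta x) - Llam g *m (2%:R *: yz - om_z x) - 0)).
exists (mkom yb yp ys yz yl); split.
  by apply/Vrel_step/step; rewrite !om_mkomE !om0.
move=> y /Vrel_step/step; rewrite !om0 => -[/yb_uniq yb_y yp_y ys_y yz_y yl_y].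
rewrite -yb_y yz_y in yl_y.
by rewrite [y]mkom_om -yb_y -(yl_uniq _ yl_y) yz_y ys_y yp_y.
Qed.

Lemma IT_iff_Bop om om' : IT g om om' <-> Bop g om' (Phi g *m (om - om') - Aop g om).
Proof.
rewrite step /Aop /= !om_mkomE !subr0 /IT.
set be := om_beta om; set ps := om_psi om; set si := om_sigma om.
set z := om_z om; set la := om_lambda om.
have -> : si - rhom g *m (kappaD g *: (si - be) + Lsig g *m (2%:R *: om_psi om' - ps))
        = si + rhom g *m (kappaD g *: (be - si) - Lsig g *m (2%:R *: om_psi om' - ps)).
  rewrite !(mulmxDr, mulmxBr, mulmxN, scalerBr, scalerDr) -!scalemxAr.
  by apply/matrixP=> i j; rewrite !mxE; lra.
have -> : la + etam g *m (Abar g *m (2%:R *: om_beta om' - be)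
                 - Llam g *m (2%:R *: om_z om' - z) - (dbar g + Llam g *m la))
        = la - etam g *m (Llam g *m la + dbar g - Abar g *m (2%:R *: om_beta om' - be)
                 + Llam g *m (2%:R *: om_z om' - z)).
  rewrite !(mulmxDr, mulmxBr, mulmxN, scalerBr, scalerDr) -!scalemxAr.
  by apply/matrixP=> i j; rewrite !mxE; lra.
by [].
Qed.

Lemma Uop_Vrel_iff om om' :
  Vrel g (Uop g om) om' <-> Bop g om' (Phi g *m (om - om') - Aop g om).
Proof. by rewrite Vrel_iff /Uop addrAC mulmxBr mulmxA mulmxV // mul1mx. Qed.

Lemma zero_in_AB_iff om : zero_in_AB g om <-> Bop g om (- Aop g om).
Proof.
split=> [[v [Bv Av0]] | BA]; last by exists (- Aop g om); rewrite subrr.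
suff -> : - Aop g om = v by [].
by apply/eqP; rewrite eq_sym -addr_eq0 addrC Av0.
Qed.

End ForwardBackward.

Section Equilibria.
Variables (R : realType) (N H : nat) (g : data R N H).
Hypothesis N_gt0 : (0 < N)%N.

Let N_neq0 : (N%:R : R) != 0.
Proof. by rewrite pnatr_eq0 -lt0n. Qed.

Lemma Abar_mulE (be : 'cV[R]_N) n j :
  (Abar g *m be) (mxtens_index (n, j)) 0 = Atil g j n * be n 0.
Proof.
rewrite mxE (bigD1 n) //= big1 ?addr0 => [|m mn]; rewrite mxE mxtens_indexK /=.
  by rewrite eqxx.
by rewrite eq_sym (negbTE mn) mul0r.
Qed.

Lemma AbarT_kron_mul (gam : 'cV[R]_(M N H)) :
  (Abar g)^T *m kron (onev R N) gam = (Atil g)^T *m gam.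
Proof.
apply/matrixP=> n c; rewrite (ord1 c) !mxE sum_mxtens_index (bigD1 n) //=.
rewrite [X in _ + X]big1 ?addr0 => [|m mn]; last first.
  by apply: big1 => j _; rewrite !mxE mxtens_indexK /= (negbTE mn) mul0r.
by apply: eq_bigr => j _; rewrite tensmx_const1E !mxE mxtens_indexK /= eqxx.
Qed.

Lemma sum_col_mx m1 m2 (F : 'I_N -> 'cV[R]_m1) (G : 'I_N -> 'cV[R]_m2) :
  \sum_n col_mx (F n) (G n) = col_mx (\sum_n F n) (\sum_n G n).
Proof. by elim/big_rec3: _ => [|i x y z _ ->]; rewrite ?col_mx0 ?add_col_mx. Qed.

Lemma sum_dloc : \sum_n dloc g n = dvec g.
Proof.
rewrite /dloc big_split /= sumr_const card_ord scalerMnl.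
rewrite !sum_col_mx big1_eq -mulr_natr mulVf // scale1r.
have sum_delta (v : 'cV[R]_N) : \sum_n v n 0 *: uvec R n = v.
  by rewrite [RHS]matrix_sum_delta; apply: eq_bigr => i _; rewrite big_ord1.
have sum_Pi_delta (v : 'cV[R]_N) : \sum_n v n 0 *: (PiD g *m uvec R n) = PiD g *m v.
  by rewrite -{2}(sum_delta v) mulmx_sumr; apply: eq_bigr => n _; rewrite scalemxAr.
rewrite sumrN !sum_Pi_delta sum_delta /dvec !add_col_mx addr0 !mulmxBr.
congr col_mx; first by rewrite addrC.
by congr col_mx; congr col_mx; rewrite ?opprB addrA addrAC.
Qed.

Lemma sum_agents_residual (be : 'cV[R]_N) (z : 'cV[R]_(N * M N H)) j :
  (forall i k, wD g i k = wD g k i) ->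
  \sum_n (Abar g *m be - dbar g - Llam g *m z) (mxtens_index (n, j)) 0
  = (Atil g *m be) j 0 - dvec g j 0.
Proof.
move=> w_sym.
under eq_bigr do rewrite !mxBE Abar_mulE [dbar g _ _]mxE mxtens_indexK.
rewrite !sumrB (sum_tensmx_laplacian_mul w_sym) subr0 -sum_dloc summxE [in RHS]mxE.
by congr (_ - _); apply: eq_bigr => n _.
Qed.

Lemma Fmap_Fhat (be : 'cV[R]_N) :
  Fmap g be = Fhat g be (((N%:R)^-1 * \sum_i be i 0) *: onev R N).
Proof. by apply/matrixP=> i j; rewrite !mxE mulr1 mulVKf. Qed.

Lemma zero_in_AB_components om : zero_in_AB g om ->
  [/\ normal_cone (Omega g) (om_beta om)
        (- Fhat g (om_beta om) (om_sigma om) - (Abar g)^T *m om_lambda om),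
      Lsig g *m om_sigma om = 0,
      Lsig g *m om_psi om = kappaD g *: (om_beta om - om_sigma om),
      Llam g *m om_lambda om = 0 &
      normal_cone (@nonneg R _) (om_lambda om)
        (Abar g *m om_beta om - dbar g - Llam g *m om_z om)].
Proof.
move/zero_in_AB_iff/Bop_iff; rewrite /Aop /= mkomN !om_mkomE opprD.
case=> nc_b /oppr_inj/esym Lsi0 Lps /oppr_inj/esym Lla0 nc_l.
split=> //; first by rewrite -Lps -scalerN opprB.
by rewrite Lla0 subr0 [- _ + _]addrC in nc_l.
Qed.

Hypothesis w_conn : connected_weighted_graph (wD g).
Hypothesis kappa_gt0 : 0 < kappaD g.

Let i0 : 'I_N := Ordinal N_gt0.
Let w_sym : forall i j, wD g i j = wD g j i.
Proof. by case: w_conn. Qed.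

Lemma zero_in_AB_sigma om : zero_in_AB g om ->
  om_sigma om = ((N%:R)^-1 * \sum_i om_beta om i 0) *: onev R N.
Proof.
case/zero_in_AB_components=> _ Lsi0 Lps _ _.
have sum_si : \sum_i om_sigma om i 0 = \sum_i om_beta om i 0.
  have := sum_laplacian_mul w_sym (om_psi om); rewrite -/(Lsig g) Lps.
  rewrite (eq_bigr (fun i => kappaD g * (om_beta om i 0 - om_sigma om i 0))) => [|i _];
    last by rewrite !mxE.
  rewrite -mulr_sumr sumrB => /eqP; rewrite mulf_eq0 gt_eqF //= subr_eq0.
  by move/eqP.
have si_const := laplacian_ker_const w_sym w_conn i0 Lsi0.
set c := om_sigma om i0 0 in si_const.
have sum_c : \sum_i om_sigma om i 0 = c *+ N.
  by rewrite si_const (eq_bigr (fun=> c)) ?sumr_const ?card_ord // => i _; rewrite !mxE mulr1.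
by rewrite si_const -sum_si sum_c -[c *+ N]mulr_natl mulKf.
Qed.

Lemma zero_in_AB_lambda om : zero_in_AB g om ->
  exists gam : 'cV[R]_(M N H), nonneg gam /\ om_lambda om = kron (onev R N) gam.
Proof.
case/zero_in_AB_components=> _ _ _ Lla0 nc_l.
exists (\col_j om_lambda om (mxtens_index (i0, j)) 0); split.
  by move=> j; rewrite mxE; case: (normal_cone_nonneg_compl nc_l (mxtens_index (i0, j))).
exact: (tensmx_laplacian_ker w_sym w_conn i0 Lla0).
Qed.

Lemma zero_in_AB_vGNE om : zero_in_AB g om -> vGNE g (om_beta om).
Proof.
move=> zAB; have [gam [gam_ge0 la_gam]] := zero_in_AB_lambda zAB.
case/zero_in_AB_components: (zAB) => nc_b _ _ _ nc_l.
set be := om_beta om; set nl := Abar g *m be - dbar g - Llam g *m om_z om in nc_l.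
have compl := normal_cone_nonneg_compl nc_l.
have slack j : (Atil g *m be) j 0 - dvec g j 0 = \sum_n nl (mxtens_index (n, j)) 0.
  by rewrite sum_agents_residual.
have gam_slack j : gam j 0 * \sum_n nl (mxtens_index (n, j)) 0 = 0.
  rewrite mulr_sumr big1 // => n _; case: (compl (mxtens_index (n, j))) => _ _.
  by rewrite la_gam tensmx_const1E mulrC.
have Kbe : Kset g be.
  split=> [|j]; first by case: nc_b.
  have := slack j; have : \sum_n nl (mxtens_index (n, j)) 0 <= 0.
    by apply: sumr_le0 => n _; case: (compl (mxtens_index (n, j))).
  lra.
split=> // be' [Obe' Kbe'].
rewrite Fmap_Fhat -zero_in_AB_sigma //.
set nb := - _ - _ in nc_b.
have -> : Fhat g be (om_sigma om) = - nb - (Atil g)^T *m gam.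
  by rewrite /nb -AbarT_kron_mul -la_gam; apply/matrixP=> i j; rewrite !mxE; lra.
have -> : ((be' - be)^T *m (- nb - (Atil g)^T *m gam)) 0 0
        = - (nb^T *m (be' - be)) 0 0 - ((Atil g *m (be' - be))^T *m gam) 0 0.
  by rewrite mulmxBr mulmxN mxBE mxNE [in RHS]dotmxC trmx_mul mulmxA.
have := nc_b.2 be' Obe'.
have : ((Atil g *m (be' - be))^T *m gam) 0 0 <= 0.
  rewrite dotmx_sum (eq_bigr (fun j => ((Atil g *m be') j 0 - dvec g j 0) * gam j 0
                                       - gam j 0 * \sum_n nl (mxtens_index (n, j)) 0)).
    rewrite sumrB [X in _ - X]big1 ?subr0 => [|j _]; last exact: gam_slack.
    by apply: sumr_le0 => j _; rewrite mulr_le0_ge0 // subr_le0.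
  by move=> j _; rewrite -slack mulmxBr mxBE; ring.
lra.
Qed.

End Equilibria.

Theorem theorem1 (R : realType) (N H : nat) (g : data R N H) :
  (2 <= N)%N -> (1 <= H)%N ->
  0 <= rD g -> 0 < alphaD g ->
  (forall n, 0 < aD g n) -> (forall n, 0 < bD g n) ->
  bloD g < bhiD g ->
  (forall h, 0 <= fhatD g h 0) ->
  slater g ->
  connected_weighted_graph (wD g) ->
  0 < kappaD g ->
  (forall n, 0 < tauD g n) -> (forall n, 0 < upsD g n) -> (forall n, 0 < rhoD g n) ->
  (forall n, 0 < deltaD g n) -> (forall n, 0 < etaD g n) ->
  posdef (Phi g) ->
  (forall x : 'cV[R]_(Dim N H), exists! y, Vrel g x y)
  /\
  (forall om om' : 'cV[R]_(Dim N H),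
     Omega g (om_beta om) -> nonneg (om_lambda om) ->
     IT g om om' ->
     Vrel g (Uop g om) om' /\
     (exists v, Bop g om' v /\ Aop g om + v + Phi g *m (om' - om) = 0))
  /\
  (forall om : 'cV[R]_(Dim N H),
     (Vrel g (Uop g om) om <-> zero_in_AB g om) /\
     (IT g om om <-> zero_in_AB g om))
  /\
  (forall om : 'cV[R]_(Dim N H),
     zero_in_AB g om ->
     om_sigma om = ((N%:R)^-1 * \sum_i om_beta om i 0) *: onev R N /\
     (exists gam : 'cV[R]_(M N H),
        nonneg gam /\ om_lambda om = kron (onev R N) gam) /\
     vGNE g (om_beta om)).
Proof.
move=> N_ge2 _ _ _ _ _ lo_lt_hi _ _ w_conn kappa_gt0 tau_gt0 ups_gt0 rho_gt0
       delta_gt0 eta_gt0 Phi_pd.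
have lo_le_hi := ltW lo_lt_hi.
have Phi_unit := posdef_unit Phi_pd.
have N_gt0 : (0 < N)%N by apply: leq_trans N_ge2.
have IT_step := IT_iff_Bop tau_gt0 ups_gt0 rho_gt0 delta_gt0 eta_gt0 lo_le_hi.
have Uop_step := Uop_Vrel_iff Phi_unit.
split; first exact: Vrel_ex_uniq tau_gt0 ups_gt0 rho_gt0 delta_gt0 eta_gt0 lo_le_hi Phi_unit.
split.
  move=> om om' _ _ /IT_step Bom'; split; first exact/Uop_step.
  exists (Phi g *m (om - om') - Aop g om); split=> //.
  by rewrite -(opprB om om') mulmxN (addrC (Aop g om)) subrK subrr.
split=> [om | om zAB].
  by rewrite zero_in_AB_iff Uop_step IT_step subrr mulmx0 add0r.
split; first exact: zero_in_AB_sigma N_gt0 w_conn kappa_gt0 _ zAB.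
split; first exact: zero_in_AB_lambda N_gt0 w_conn _ zAB.
exact: zero_in_AB_vGNE N_gt0 w_conn kappa_gt0 _ zAB.
Qed.
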